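(* Let $\beta\in\mathbb C$. Let $L$ be a complex Leibniz algebra, let $I$ be the ideal generated by all squares $[x,x]$, $x\in L$, and suppose $L/I\cong\mathfrak{e}(2)$ and $I$, as a right $\mathfrak{e}(2)$-module via $(i,x+I)\mapsto[i,x]$, is isomorphic to the four-dimensional module with basis $X_1,\dots,X_4$ and action $(X_2,p_+)=X_4$, $(X_1,p_-)=X_3$, $(X_1,l)=-\tfrac12X_1-\beta X_4$, $(X_2,l)=\tfrac12X_2-\beta X_3$, $(X_3,l)=\tfrac12X_3$, $(X_4,l)=-\tfrac12X_4$ (all other products zero). Then there exists a basis $\{l,p_+,p_-,X_1,X_2,X_3,X_4\}$ of $L$ (with $X_i\in I$) in which the only nonzero products are $[l,p_+]=p_+$, $[p_+,l]=-p_+$, $[l,p_-]=-p_-$, $[p_-,l]=p_-$, $[X_2,p_+]=X_4$, $[X_1,p_-]=X_3$, $[X_1,l]=-\tfrac12X_1-\beta X_4$, $[X_2,l]=\tfrac12X_2-\beta X_3$, $[X_3,l]=\tfrac12X_3$, $[X_4,l]=-\tfrac12X_4$.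
   Context: A (right) Leibniz algebra is a vector space $L$ with a bilinear bracket satisfying $[[x,y],z]=[[x,z],y]+[x,[y,z]]$. The ideal $I$ generated by squares satisfies $[L,I]=0$, so $L/I$ is a Lie algebra and $I$ is a right $L/I$-module via $(i,x+I)\mapsto[i,x]$. $\mathfrak{e}(2)$ is the complex Lie algebra with basis $\{l,p_+,p_-\}$ and brackets $[l,p_+]=p_+$, $[l,p_-]=-p_-$, $[p_+,p_-]=0$. *)

From mathcomp Require Import all_boot all_algebra.
From mathcomp Require Import reals Rstruct complex.
Set Implicit Arguments. Unset Strict Implicit. Unset Printing Implicit Defensive.
Import GRing.Theory.
Local Open Scope ring_scope.

Definition CC : fieldType := (Rdefinitions.R)[i].

Section Leibniz.
Variable L : lmodType CC.
Variable br : L -> L -> L.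

Definition bilinear_br : Prop :=
  (forall x, linear (br x)) /\ (forall y, linear (fun x => br x y)).

Definition right_leibniz : Prop :=
  forall x y z, br (br x y) z = br (br x z) y + br x (br y z).

Definition is_leibniz_algebra : Prop := bilinear_br /\ right_leibniz.

Definition is_subspace (S : L -> Prop) : Prop :=
  S 0 /\ (forall x y, S x -> S y -> S (x + y)) /\ (forall (a : CC) x, S x -> S (a *: x)).

Definition is_ideal (S : L -> Prop) : Prop :=
  is_subspace S /\ (forall x y, S x -> S (br x y) /\ S (br y x)).

Definition sq_ideal (x : L) : Prop :=
  forall S : L -> Prop, is_ideal S -> (forall y, S (br y y)) -> S x.

Definition is_basis n (b : 'I_n -> L) : Prop :=
  (forall c : 'I_n -> CC, \sum_(k < n) c k *: b k = 0 -> forall k, c k = 0) /\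
  (forall x, exists c : 'I_n -> CC, x = \sum_(k < n) c k *: b k).
End Leibniz.

Definition ev n (k : 'I_n) : 'rV[CC]_n := \row_(j < n) (j == k)%:R.

Definition e2_l : 'I_3 := inord 0.
Definition e2_pp : 'I_3 := inord 1.
Definition e2_pm : 'I_3 := inord 2.

Definition e2_table (i j : 'I_3) : 'rV[CC]_3 :=
  match nat_of_ord i, nat_of_ord j with
  | 0, 1 => ev e2_pp
  | 1, 0 => - ev e2_pp
  | 0, 2 => - ev e2_pm
  | 2, 0 => ev e2_pm
  | _, _ => 0
  end.

Definition e2_br (x y : 'rV[CC]_3) : 'rV[CC]_3 :=
  \sum_(i < 3) \sum_(j < 3) (x 0 i * y 0 j) *: e2_table i j.

(* The four-dimensional right e(2)-module M_beta = CC^4, basis X1..X4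
   (indices 0..3):
   (X2,p+)=X4, (X1,p-)=X3, (X1,l)=-1/2 X1 - beta X4, (X2,l)=1/2 X2 - beta X3,
   (X3,l)=1/2 X3, (X4,l)=-1/2 X4, all other products of basis elements 0. *)
Definition X_ (k : nat) : 'rV[CC]_4 := ev (inord k.-1).

Definition mod_table (beta : CC) (i : 'I_4) (j : 'I_3) : 'rV[CC]_4 :=
  match nat_of_ord i, nat_of_ord j with
  | 1, 1 => X_ 4
  | 0, 2 => X_ 3
  | 0, 0 => - 2^-1 *: X_ 1 - beta *: X_ 4
  | 1, 0 => 2^-1 *: X_ 2 - beta *: X_ 3
  | 2, 0 => 2^-1 *: X_ 3
  | 3, 0 => - 2^-1 *: X_ 4
  | _, _ => 0
  end.

Definition mod_act (beta : CC) (m : 'rV[CC]_4) (e : 'rV[CC]_3) : 'rV[CC]_4 :=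
  \sum_(i < 4) \sum_(j < 3) (m 0 i * e 0 j) *: mod_table beta i j.

(* The multiplication table of the conclusion, for an ordered family
   b = (l, p+, p-, X1, X2, X3, X4) (indices 0..6). *)
Definition target_table (L : lmodType CC) (beta : CC) (b : 'I_7 -> L)
    (i j : 'I_7) : L :=
  let B k := b (inord k) in
  match nat_of_ord i, nat_of_ord j with
  | 0, 1 => B 1
  | 1, 0 => - B 1
  | 0, 2 => - B 2
  | 2, 0 => B 2
  | 4, 1 => B 6
  | 3, 2 => B 5
  | 3, 0 => - 2^-1 *: B 3 - beta *: B 6
  | 4, 0 => 2^-1 *: B 4 - beta *: B 5
  | 5, 0 => 2^-1 *: B 5
  | 6, 0 => - 2^-1 *: B 6
  | _, _ => 0
  end.

(* Right multiplication by a lift l of the basis vector l of e(2) acts on I = M_beta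
   triangularly with eigenvalues -1/2, 1/2, 1/2, -1/2, so for every integer n the map
   x |-> [x,l] - n x is bijective on I.  As [L,I] = 0, correcting
   arbitrary lifts by elements of I yields lifts l, p+, p- with [l,l] = 0,
   [p+,l] = -p+ and [p-,l] = p-.  Every bracket of these lifts is then an eigenvector
   of integer eigenvalue that agrees with the e(2) table modulo I, hence equals it.
   Pulling back the standard basis of M_beta along the module isomorphism completes
   the basis, and the module structure gives the remaining products. *)

From HB Require Import structures.
From mathcomp Require Import all_boot all_algebra.
From mathcomp Require Import reals Rstruct complex.
From mathcomp Require Import ring zify.
Set Implicit Arguments. Unset Strict Implicit.
Import GRing.Theory Num.Theory.
Local Open Scope ring_scope.

Lemma intr_neq_half (n : int) : n%:~R != 2^-1 :> CC.
Proof.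
apply/eqP => /(congr1 ( *%R 2)); rewrite mulfV ?pnatr_eq0 // => h.
have : (2 * n)%:~R = 1%:~R :> CC by rewrite intrM h.
by move/(@intr_inj (Rdefinitions.R)[i]); lia.
Qed.

Lemma intr_neq_Nhalf (n : int) : n%:~R != - 2^-1 :> CC.
Proof. by rewrite -eqr_oppLR -intrN intr_neq_half. Qed.

Lemma sum_ev {V : lmodType CC} {n} (k : 'I_n) (F : 'I_n -> V) :
  \sum_(i < n) ev k 0 i *: F i = F k.
Proof.
rewrite (bigD1 k) //= big1 => [|i /negbTE ik]; first by rewrite mxE eqxx scale1r addr0.
by rewrite mxE ik scale0r.
Qed.

Lemma row_sum_ev n (m : 'rV[CC]_n) : \sum_(k < n) m 0 k *: ev k = m.
Proof.
apply/rowP => j; rewrite summxE (bigD1 j) //= big1 => [|k /negbTE kj].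
  by rewrite !mxE eqxx mulr1 addr0.
by rewrite !mxE eq_sym kj mulr0.
Qed.

Lemma sum_ev2 (V : lmodType CC) n p (k : 'I_n) (j : 'I_p) (T : 'I_n -> 'I_p -> V) :
  \sum_(i < n) \sum_(i' < p) (ev k 0 i * ev j 0 i') *: T i i' = T k j.
Proof.
rewrite -(sum_ev k (T^~ j)); apply: eq_bigr => i _.
rewrite -(sum_ev j (fun i' => ev k 0 i *: T i i')).
by apply: eq_bigr => i' _; rewrite scalerA mulrC.
Qed.

Lemma e2_br_ev i j : e2_br (ev i) (ev j) = e2_table i j.
Proof. exact: sum_ev2. Qed.

Lemma e2_table_antisym i j : e2_table i j = - e2_table j i.
Proof.
by case: i j => [[|[|[|?]]] ?] [[|[|[|?]]] ?] //=; rewrite ?oppr0 ?opprK.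
Qed.

Lemma e2_brC x y : e2_br x y = - e2_br y x.
Proof.
rewrite /e2_br exchange_big /= -sumrN; apply: eq_bigr => i _.
by rewrite -sumrN; apply: eq_bigr => j _; rewrite mulrC e2_table_antisym scalerN.
Qed.

Lemma mod_act_ev beta k j : mod_act beta (ev k) (ev j) = mod_table beta k j.
Proof. exact: sum_ev2. Qed.

Lemma row4P (u v : 'rV[CC]_4) :
  (forall k, (k < 4)%N -> u 0 (inord k) = v 0 (inord k)) -> u = v.
Proof. by move=> uv; apply/rowP => j; rewrite -(inord_val j) uv. Qed.

Section RightActionOfL.
Variable beta : CC.

Lemma mod_act_lE (m : 'rV[CC]_4) k : (k < 4)%N ->
  mod_act beta m (ev e2_l) 0 (inord k) =
  [:: - 2^-1 * m 0 (inord 0); 2^-1 * m 0 (inord 1);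
      - beta * m 0 (inord 1) + 2^-1 * m 0 (inord 2);
      - beta * m 0 (inord 0) - 2^-1 * m 0 (inord 3)]`_k.
Proof.
move=> lt_k4.
have -> : mod_act beta m (ev e2_l) = \sum_(i < 4) m 0 i *: mod_table beta i e2_l.
  by apply: eq_bigr => i _; under eq_bigr do rewrite mulrC -scalerA; rewrite sum_ev.
have i0 : inord 0 = ord0 :> 'I_4 := inord_val ord0.
have i1 : inord 1 = lift ord0 ord0 :> 'I_4 := inord_val (lift ord0 ord0).
have i2 : inord 2 = lift ord0 (lift ord0 ord0) :> 'I_4 :=
  inord_val (lift ord0 (lift ord0 ord0)).
have i3 : inord 3 = lift ord0 (lift ord0 (lift ord0 ord0)) :> 'I_4 :=
  inord_val (lift ord0 (lift ord0 (lift ord0 ord0))).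
rewrite !big_ord_recl big_ord0 /mod_table /e2_l inordK //= /X_ /= !mxE.
by case: k lt_k4 => [|[|[|[|]]]] //= _; rewrite i0 i1 i2 i3 /=; ring.
Qed.

Variable a : CC.
Hypotheses (a_neq_half : a != 2^-1) (a_neq_Nhalf : a != - 2^-1).

(* The action of l on M_beta is triangular with diagonal (-1/2, 1/2, 1/2, -1/2),
   so its shift by -a is inverted by back substitution. *)
Definition mod_act_l_shift_inv (t : 'rV[CC]_4) : 'rV[CC]_4 :=
  let m0 := - t 0 (inord 0) / (2^-1 + a) in
  let m1 := t 0 (inord 1) / (2^-1 - a) in
  \row_(k < 4) [:: m0; m1; (t 0 (inord 2) + beta * m1) / (2^-1 - a);
                  - (t 0 (inord 3) + beta * m0) / (2^-1 + a)]`_k.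

Let two_neq0 : 2 != 0 :> CC. Proof. by rewrite pnatr_eq0. Qed.

Let one_add_a2_neq0 : 1 + a * 2 != 0.
Proof.
have -> : 1 + a * 2 = 2 * (2^-1 + a) by field.
by rewrite mulf_neq0 // addrC addr_eq0.
Qed.

Let one_sub_a2_neq0 : 1 + - a * 2 != 0.
Proof.
have -> : 1 + - a * 2 = 2 * (2^-1 - a) by field.
by rewrite mulf_neq0 // subr_eq0 eq_sym.
Qed.

Lemma mod_act_l_shift_invK m :
  mod_act_l_shift_inv (mod_act beta m (ev e2_l) - a *: m) = m.
Proof.
apply: row4P => k lt_k4; rewrite mxE inordK //.
by case: k lt_k4 => [|[|[|[|]]]] //= _; rewrite !mxE !mod_act_lE //=; field.
Qed.

Lemma mod_act_l_shift_invKV t :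
  mod_act beta (mod_act_l_shift_inv t) (ev e2_l) - a *: mod_act_l_shift_inv t = t.
Proof.
apply: row4P => k lt_k4; rewrite !mxE mod_act_lE // !mxE !inordK //.
by case: k lt_k4 => [|[|[|[|]]]] //= _; field.
Qed.

Lemma mod_act_l_eigen_eq0 m : mod_act beta m (ev e2_l) = a *: m -> m = 0.
Proof.
move=> eig_m; rewrite -(mod_act_l_shift_invK m) eig_m subrr.
apply: row4P => k lt_k4; rewrite !mxE inordK //.
by case: k lt_k4 => [|[|[|[|]]]] //= _; rewrite ?mxE; field.
Qed.

End RightActionOfL.

Section RowCombination.
Variables (V : lmodType CC) (n : nat) (xs : 'I_n -> V).

Definition rowcomb (m : 'rV[CC]_n) : V := \sum_(k < n) m 0 k *: xs k.

Fact rowcomb_is_linear : linear rowcomb.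
Proof.
move=> a u v; rewrite /rowcomb scaler_sumr -big_split; apply: eq_bigr => k _.
by rewrite !mxE scalerDl scalerA.
Qed.

HB.instance Definition _ :=
  GRing.isLinear.Build CC 'rV[CC]_n V _ rowcomb rowcomb_is_linear.

Lemma rowcomb_ev k : rowcomb (ev k) = xs k.
Proof. exact: sum_ev. Qed.

End RowCombination.

Section SplitBasis.
Variables (L : lmodType CC) (m n : nat) (phi : {linear L -> 'rV[CC]_m}).
Variables (bs : 'I_m -> L) (xs : 'I_n -> L) (b : 'I_(m + n) -> L).
Hypotheses (b_lshift : forall i, b (lshift n i) = bs i)
           (b_rshift : forall j, b (rshift m j) = xs j).
Hypotheses (phi_bs : forall i, phi (bs i) = ev i) (phi_xs : forall j, phi (xs j) = 0).
Hypothesis xs_free : forall c, rowcomb xs c = 0 -> c = 0.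
Hypothesis xs_span : forall y, phi y = 0 -> exists c, y = rowcomb xs c.

Lemma is_basis_split : is_basis b.
Proof.
have sum_split c : \sum_k c k *: b k =
    rowcomb bs (\row_i c (lshift n i)) + rowcomb xs (\row_j c (rshift m j)).
  rewrite big_split_ord /rowcomb.
  by congr (_ + _); apply: eq_bigr => i _; rewrite mxE ?b_lshift ?b_rshift.
have phi_bs_comb e : phi (rowcomb bs e) = e.
  rewrite linear_sum -[RHS]row_sum_ev.
  by apply: eq_bigr => i _; rewrite linearZ_LR phi_bs.
have phi_xs_comb c : phi (rowcomb xs c) = 0.
  by rewrite linear_sum big1 // => j _; rewrite linearZ_LR phi_xs scaler0.
split.
- move=> c; rewrite sum_split => c0 k.
  have cl : \row_i c (lshift n i) = 0.
    by have := congr1 phi c0; rewrite linearD phi_bs_comb phi_xs_comb addr0 linear0.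
  rewrite cl linear0 add0r in c0; have cr := xs_free c0.
  case: (split_ordP k) => [i|j] ->.
    by move/rowP: cl => /(_ i); rewrite !mxE.
  by move/rowP: cr => /(_ j); rewrite !mxE.
- move=> x; set e := phi x.
  have [c xE] : exists c, x - rowcomb bs e = rowcomb xs c.
    by apply: xs_span; rewrite linearB phi_bs_comb subrr.
  exists (fun k => match split k with inl i => e 0 i | inr j => c 0 j end).
  have split_l i : split (lshift n i) = inl i := unsplitK (inl _ i).
  have split_r j : split (rshift m j) = inr j := unsplitK (inr _ j).
  rewrite sum_split; set el := \row_i _; set cr := \row_j _.
  have -> : el = e by apply/rowP => i; rewrite mxE split_l.
  have -> : cr = c by apply/rowP => j; rewrite mxE split_r.
  by rewrite -xE addrC subrK.
Qed.

End SplitBasis.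

Section LeibnizAlgebra.
Variables (L : lmodType CC) (br : L -> L -> L).
Hypothesis HL : is_leibniz_algebra br.

Let br_r x : {linear L -> L} :=
  HB.pack (br x) (GRing.isLinear.Build _ _ _ _ (br x) (HL.1.1 x)).
Let br_l y : {linear L -> L} :=
  HB.pack (br^~ y) (GRing.isLinear.Build _ _ _ _ (br^~ y) (HL.1.2 y)).

Lemma br0r x : br x 0 = 0. Proof. exact: (linear0 (br_r x)). Qed.
Lemma brDr x y z : br x (y + z) = br x y + br x z.
Proof. exact: (linearD (br_r x) y z). Qed.
Lemma brZr x a y : br x (a *: y) = a *: br x y.
Proof. exact: (linearZ_LR (br_r x) a y). Qed.
Lemma br0l y : br 0 y = 0. Proof. exact: (linear0 (br_l y)). Qed.
Lemma brDl x y z : br (x + y) z = br x z + br y z.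
Proof. exact: (linearD (br_l z) x y). Qed.
Lemma brZl a x y : br (a *: x) y = a *: br x y.
Proof. exact: (linearZ_LR (br_l y) a x). Qed.

Local Notation I := (sq_ideal br).

Lemma sq_ideal0 : I 0.
Proof. by move=> S [[]]. Qed.

Lemma sq_idealD x y : I x -> I y -> I (x + y).
Proof. by move=> Ix Iy S IS Ssq; apply: IS.1.2.1; [exact: Ix | exact: Iy]. Qed.

Lemma sq_idealZ a x : I x -> I (a *: x).
Proof. by move=> Ix S IS Ssq; apply: IS.1.2.2; exact: Ix. Qed.

Lemma sq_idealB x y : I x -> I y -> I (x - y).
Proof. by move=> Ix Iy; rewrite -scaleN1r; apply: sq_idealD => //; apply: sq_idealZ. Qed.

Lemma sq_ideal_sq x : I (br x x).
Proof. by move=> S _; apply. Qed.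

Lemma sq_ideal_brl x y : I x -> I (br x y).
Proof. by move=> Ix S IS Ssq; exact: (IS.2 x y (Ix S IS Ssq)).1. Qed.

Lemma sq_ideal_sum (J : Type) (r : seq J) (F : J -> L) :
  (forall j, I (F j)) -> I (\sum_(j <- r) F j).
Proof. by move=> IF; apply: big_ind => //; [exact: sq_ideal0 | exact: sq_idealD]. Qed.

(* The left annihilator of L is an ideal containing every square. *)
Lemma br_sq_ideal x i : I i -> br x i = 0.
Proof.
move=> Ii; move: x; apply: (Ii (fun i => forall x, br x i = 0)).
- split; [split; [|split]|].
  + by move=> x; rewrite br0r.
  + by move=> y z y0 z0 x; rewrite brDr y0 z0 addr0.
  + by move=> a y y0 x; rewrite brZr y0 scaler0.
  + move=> y z y0; split => x.
    * by have := HL.2 x y z; rewrite y0 br0l (y0 (br x z)) add0r.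
    * by have := HL.2 x z y; rewrite (y0 (br x z)) y0 br0l add0r.
- by move=> y x; apply: (addrI (br (br x y) y)); rewrite addr0 -HL.2.
Qed.

Definition br_eigen (z : L) (a : CC) (x : L) := br x z = a *: x.

Lemma br_eigenD z a x y : br_eigen z a x -> br_eigen z a y -> br_eigen z a (x + y).
Proof. by rewrite /br_eigen brDl scalerDr => -> ->. Qed.

Lemma br_eigen_br z a b x y :
  br_eigen z a x -> br_eigen z b y -> br_eigen z (a + b) (br x y).
Proof. by rewrite /br_eigen HL.2 => -> ->; rewrite brZl brZr scalerDl. Qed.

End LeibnizAlgebra.

Section SqIdealModule.
Variables (beta : CC) (L : lmodType CC) (br : L -> L -> L).
Variables (phi : {linear L -> 'rV[CC]_3}) (psi : L -> 'rV[CC]_4).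
Local Notation I := (sq_ideal br).
Hypothesis psi_lin : forall (a : CC) x y, I x -> I y ->
  psi (a *: x + y) = a *: psi x + psi y.
Hypothesis psi_inj : forall x y, I x -> I y -> psi x = psi y -> x = y.
Hypothesis psi_surj : forall m, exists x, I x /\ psi x = m.
Hypothesis psi_br : forall i x, I i -> psi (br i x) = mod_act beta (psi i) (phi x).

Lemma psi0 : psi 0 = 0.
Proof.
have := psi_lin 1 (@sq_ideal0 _ br) (@sq_ideal0 _ br); rewrite !scale1r !addr0 => psi00.
by apply: (addrI (psi 0)); rewrite addr0 -psi00.
Qed.

Lemma psiD x y : I x -> I y -> psi (x + y) = psi x + psi y.
Proof. by move=> Ix Iy; have := psi_lin 1 Ix Iy; rewrite !scale1r. Qed.

Lemma psiZ a x : I x -> psi (a *: x) = a *: psi x.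
Proof.
by move=> Ix; have := psi_lin a Ix (@sq_ideal0 _ br); rewrite !addr0 psi0 addr0.
Qed.

Lemma psiB x y : I x -> I y -> psi (x - y) = psi x - psi y.
Proof.
move=> Ix Iy; have INy : I (- y) by rewrite -scaleN1r; apply: sq_idealZ.
by rewrite psiD // -scaleN1r psiZ // scaleN1r.
Qed.

Lemma psi_sum (J : Type) (r : seq J) (F : J -> L) :
  (forall j, I (F j)) -> psi (\sum_(j <- r) F j) = \sum_(j <- r) psi (F j).
Proof.
move=> IF; elim: r => [|j r IHr]; first by rewrite !big_nil psi0.
by rewrite !big_cons psiD ?IHr //; apply: sq_ideal_sum.
Qed.

Section Shift.
Variables (z : L) (a : CC).
Hypotheses (phi_z : phi z = ev e2_l) (a_neq_half : a != 2^-1) (a_neq_Nhalf : a != - 2^-1).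

Lemma sq_ideal_br_eigen_eq0 y : I y -> br_eigen br z a y -> y = 0.
Proof.
move=> Iy yz; apply: (psi_inj Iy (@sq_ideal0 _ br)); rewrite psi0.
apply: (mod_act_l_eigen_eq0 (beta := beta) a_neq_half a_neq_Nhalf).
by rewrite -phi_z -psi_br // yz psiZ.
Qed.

Lemma sq_ideal_br_shift_surj g : I g -> exists2 y, I y & br y z - a *: y = g.
Proof.
move=> Ig; have [y [Iy psi_y]] := psi_surj (mod_act_l_shift_inv beta a (psi g)).
have Iyz : I (br y z) by apply: sq_ideal_brl.
have Iay : I (a *: y) by apply: sq_idealZ.
exists y => //; apply: psi_inj => //; first exact: sq_idealB.
rewrite psiB // psiZ // psi_br // phi_z psi_y.
exact: mod_act_l_shift_invKV.
Qed.

End Shift.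

Lemma exists_sq_ideal_basis :
  exists2 xs : 'I_4 -> L, forall k, I (xs k) & forall k, psi (xs k) = ev k.
Proof.
have [xs xsP] := fin_all_exists (fun k : 'I_4 => psi_surj (ev k)).
by exists xs => k; case: (xsP k).
Qed.

Section SqIdealBasis.
Variable xs : 'I_4 -> L.
Hypotheses (I_xs : forall k, I (xs k)) (psi_xs : forall k, psi (xs k) = ev k).

Lemma sq_ideal_rowcomb m : I (rowcomb xs m).
Proof. by apply: sq_ideal_sum => k; apply: sq_idealZ. Qed.

Lemma psi_rowcomb m : psi (rowcomb xs m) = m.
Proof.
rewrite psi_sum => [|k]; last exact: sq_idealZ.
by rewrite -[RHS]row_sum_ev; apply: eq_bigr => k _; rewrite psiZ ?psi_xs.
Qed.

Lemma rowcomb_psi y : I y -> rowcomb xs (psi y) = y.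
Proof.
by move=> Iy; apply: psi_inj; rewrite ?psi_rowcomb //; apply: sq_ideal_rowcomb.
Qed.

Lemma rowcomb_sq_ideal_inj m : rowcomb xs m = 0 -> m = 0.
Proof. by move=> m0; rewrite -(psi_rowcomb m) m0 psi0. Qed.

Lemma br_sq_ideal_basis k z j :
  phi z = ev j -> br (xs k) z = rowcomb xs (mod_table beta k j).
Proof.
move=> phi_z; rewrite -(rowcomb_psi (sq_ideal_brl _ (I_xs k))).
by rewrite psi_br // psi_xs phi_z mod_act_ev.
Qed.

End SqIdealBasis.

End SqIdealModule.

Section E2Lift.
Variables (L : lmodType CC) (br : L -> L -> L) (phi : {linear L -> 'rV[CC]_3}).
Local Notation I := (sq_ideal br).
Hypothesis HL : is_leibniz_algebra br.
Hypothesis phi_ker : forall x, phi x = 0 <-> I x.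
Hypothesis phi_surj : forall e, exists x, phi x = e.
Hypothesis phi_br : forall x y, phi (br x y) = e2_br (phi x) (phi y).
Hypothesis eigen_eq0 : forall z a, phi z = ev e2_l -> a != 2^-1 -> a != - 2^-1 ->
  forall y, I y -> br_eigen br z a y -> y = 0.
Hypothesis shift_surj : forall z a, phi z = ev e2_l -> a != 2^-1 -> a != - 2^-1 ->
  forall g, I g -> exists2 y, I y & br y z - a *: y = g.

Let phi_sq_ideal y : I y -> phi y = 0. Proof. by move/phi_ker. Qed.

Lemma exists_e2_l_lift : exists2 l, phi l = ev e2_l & br l l = 0.
Proof.
have [l0 phi_l0] := phi_surj (ev e2_l).
have INsq : I (- br l0 l0).
  by rewrite -scaleN1r; exact: (sq_idealZ (-1) (@sq_ideal_sq _ br l0)).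
have [y Iy] := shift_surj phi_l0 (intr_neq_half 0) (intr_neq_Nhalf 0) INsq.
rewrite mulr0z scale0r subr0 => yl0.
exists (l0 + y); first by rewrite linearD phi_l0 phi_sq_ideal // addr0.
by rewrite (brDl HL) !(brDr HL) !(br_sq_ideal HL _ Iy) !addr0 yl0 subrr.
Qed.

Section Weight.
Variables (l : L) (phi_l : phi l = ev e2_l).

Lemma exists_br_eigen_lift e (n : int) :
  e2_br e (ev e2_l) = n%:~R *: e -> exists2 x, phi x = e & br_eigen br l n%:~R x.
Proof.
move=> e_eig; have [x0 phi_x0] := phi_surj e.
have Ig : I (n%:~R *: x0 - br x0 l).
  by apply/phi_ker; rewrite linearB linearZ_LR phi_br phi_x0 phi_l e_eig subrr.
have [y Iy yl] := shift_surj phi_l (intr_neq_half n) (intr_neq_Nhalf n) Ig.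
exists (x0 + y); first by rewrite linearD phi_x0 phi_sq_ideal // addr0.
rewrite /br_eigen (brDl HL) -[br y l](subrK (n%:~R *: y)) yl scalerDr addrA.
by rewrite [br x0 l + _]addrC subrK.
Qed.

Lemma br_eigen_ker_eq0 (n : int) x : phi x = 0 -> br_eigen br l n%:~R x -> x = 0.
Proof.
by move=> /phi_ker Ix; exact (eigen_eq0 phi_l (intr_neq_half n) (intr_neq_Nhalf n) Ix).
Qed.

(* [x,y] + [y,x] lies in I because e(2) is antisymmetric, and it has integer weight. *)
Lemma br_eigen_brC (m n : int) x y :
  br_eigen br l m%:~R x -> br_eigen br l n%:~R y -> br x y = - br y x.
Proof.
move=> x_eig y_eig; apply/eqP; rewrite -addr_eq0; apply/eqP.
apply: (@br_eigen_ker_eq0 (m + n)).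
  by rewrite linearD !phi_br e2_brC addNr.
rewrite intrD; apply: (br_eigenD HL); first exact (br_eigen_br HL x_eig y_eig).
by rewrite addrC; exact (br_eigen_br HL y_eig x_eig).
Qed.

Lemma br_eigen_br_eq0 (m n : int) x y :
  br_eigen br l m%:~R x -> br_eigen br l n%:~R y -> phi (br x y) = 0 -> br x y = 0.
Proof.
move=> x_eig y_eig phi0; apply: (@br_eigen_ker_eq0 (m + n)) => //.
by rewrite intrD; exact (br_eigen_br HL x_eig y_eig).
Qed.

End Weight.

Lemma exists_e2_lift : exists2 bs : 'I_3 -> L, forall i, phi (bs i) = ev i &
  forall i j, br (bs i) (bs j) = rowcomb bs (e2_table i j).
Proof.
have [l phi_l ll] := exists_e2_l_lift.
have l_eig : br_eigen br l 0%:~R l by rewrite /br_eigen ll mulr0z scale0r.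
have [pp phi_pp pp_eig] : exists2 pp, phi pp = ev e2_pp & br_eigen br l (-1)%:~R pp.
  by apply: exists_br_eigen_lift; rewrite // e2_br_ev /e2_table !inordK //= scaleN1r.
have [pm phi_pm pm_eig] : exists2 pm, phi pm = ev e2_pm & br_eigen br l 1%:~R pm.
  by apply: exists_br_eigen_lift; rewrite // e2_br_ev /e2_table !inordK //= scale1r.
exists (fun i => match val i with 0 => l | 1 => pp | _ => pm end).
  case=> -[|[|[|?]]] //= ?; rewrite ?phi_l ?phi_pp ?phi_pm;
    by congr ev; apply/val_inj/inordK.
have pp_l : br pp l = - pp by rewrite pp_eig; exact: scaleN1r.
have pm_l : br pm l = pm by rewrite pm_eig; exact: scale1r.
have l_pp : br l pp = pp by rewrite (br_eigen_brC phi_l l_eig pp_eig) pp_l opprK.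
have l_pm : br l pm = - pm by rewrite (br_eigen_brC phi_l l_eig pm_eig) pm_l.
have [pp_pp pp_pm pm_pp pm_pm] :
    [/\ br pp pp = 0, br pp pm = 0, br pm pp = 0 & br pm pm = 0].
  split; [ apply: (br_eigen_br_eq0 phi_l pp_eig pp_eig)
         | apply: (br_eigen_br_eq0 phi_l pp_eig pm_eig)
         | apply: (br_eigen_br_eq0 phi_l pm_eig pp_eig)
         | apply: (br_eigen_br_eq0 phi_l pm_eig pm_eig) ];
  by rewrite phi_br ?phi_pp ?phi_pm e2_br_ev /e2_table !inordK.
case=> -[|[|[|?]]] // ? [] -[|[|[|?]]] // ?;
  by rewrite /e2_table /= ?linear0 ?linearN /= ?rowcomb_ev /= ?inordK.
Qed.

End E2Lift.

Section JoinBasis.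
Variables (L : lmodType CC) (bs : 'I_3 -> L) (xs : 'I_4 -> L).

Definition join_basis (k : 'I_7) : L :=
  if (k < 3)%N then bs (inord k) else xs (inord (k - 3)).

Lemma join_basis_lshift (i : 'I_3) : join_basis (lshift 4 i) = bs i.
Proof. by rewrite /join_basis /= ltn_ord inord_val. Qed.

Lemma join_basis_rshift (j : 'I_4) : join_basis (rshift 3 j) = xs j.
Proof. by rewrite /join_basis /= addKn inord_val. Qed.

Lemma join_basis_table (br : L -> L -> L) beta :
  (forall i j, br (bs i) (bs j) = rowcomb bs (e2_table i j)) ->
  (forall k j, br (xs k) (bs j) = rowcomb xs (mod_table beta k j)) ->
  (forall x k, br x (xs k) = 0) ->
  forall i j, br (join_basis i) (join_basis j) = target_table beta join_basis i j.
Proof.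
move=> br_bs br_xs_bs br_xs.
case=> -[|[|[|[|[|[|[|?]]]]]]] // ? [] -[|[|[|[|[|[|[|?]]]]]]] // ?;
  rewrite /target_table /join_basis /= ?inordK //= ?br_xs ?br_bs ?br_xs_bs.
all: rewrite /e2_table /mod_table ?inordK //= /X_ /=.
all: by rewrite ?linear0 ?linearN ?linearB ?linearZ_LR /= ?rowcomb_ev.
Qed.

End JoinBasis.

Theorem mainTheorem7 (beta : CC) (L : lmodType CC) (br : L -> L -> L)
  (phi : {linear L -> 'rV[CC]_3}) (psi : L -> 'rV[CC]_4) :
  is_leibniz_algebra br ->
  (* phi induces a Lie algebra isomorphism L/I ~= e(2) *)
  (forall x, phi x = 0 <-> sq_ideal br x) ->
  (forall e, exists x, phi x = e) ->
  (forall x y, phi (br x y) = e2_br (phi x) (phi y)) ->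
  (* psi restricts to a right-module isomorphism I ~= M_beta *)
  (forall (a : CC) x y, sq_ideal br x -> sq_ideal br y ->
       psi (a *: x + y) = a *: psi x + psi y) ->
  (forall x y, sq_ideal br x -> sq_ideal br y -> psi x = psi y -> x = y) ->
  (forall m, exists x, sq_ideal br x /\ psi x = m) ->
  (forall i x, sq_ideal br i -> psi (br i x) = mod_act beta (psi i) (phi x)) ->
  exists b : 'I_7 -> L,
    is_basis b /\
    (forall k : 'I_7, (3 <= nat_of_ord k)%N -> sq_ideal br (b k)) /\
    (forall i j : 'I_7, br (b i) (b j) = target_table beta b i j).
Proof.
move=> HL phi_ker phi_surj phi_br psi_lin psi_inj psi_surj psi_br.
have [bs phi_bs br_bs] := exists_e2_lift HL phi_ker phi_surj phi_br
  (sq_ideal_br_eigen_eq0 psi_lin psi_inj psi_br)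
  (sq_ideal_br_shift_surj psi_lin psi_inj psi_surj psi_br).
have [xs I_xs psi_xs] := exists_sq_ideal_basis psi_surj.
exists (join_basis bs xs); split; [|split].
- apply: (is_basis_split (phi := phi) (join_basis_lshift bs xs)
    (join_basis_rshift bs xs) phi_bs).
  + by move=> k; apply/phi_ker.
  + exact: (rowcomb_sq_ideal_inj psi_lin I_xs psi_xs).
  + move=> y /phi_ker Iy; exists (psi y).
    by rewrite (rowcomb_psi psi_lin psi_inj I_xs psi_xs).
- by move=> k; rewrite /join_basis leqNgt => /negbTE ->.
- apply: join_basis_table => // [k j | x k].
    exact: (br_sq_ideal_basis psi_lin psi_inj psi_br I_xs psi_xs).
  exact: (br_sq_ideal HL x (I_xs k)).
Qed.
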